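(* Let $G=\sum_{i=1}^h C_{2m_i}+\sum_{j=1}^k C_{2n_j+1}$ (disjoint union of cycles), where $h,k\ge0$, $h+k\ge1$, $m_i\ge2$ and $n_j\ge1$, and let $p=|V(G)|$. Then $str(G)=\max\{p+2,\ p+1+k\}$.
   Context: $C_n$ denotes the cycle on $n$ vertices and $+$ disjoint union (an empty sum is omitted). For a graph $G$ of order $p$, a numbering is a bijection $f:V(G)\to[1,p]$; $str_f(G)=\max\{f(u)+f(v): uv\in E(G)\}$ and $str(G)=\min_f str_f(G)$. *)

From mathcomp Require Import all_boot all_order.
Set Implicit Arguments. Unset Strict Implicit. Unset Printing Implicit Defensive.

(* A (simple) graph: a finite vertex type V with adjacency relation e. *)

(* A numbering f : V -> 'I_#|V| (injective, hence bijective); the label of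
   vertex x is (f x).+1, ranging over [1, #|V|]. *)
Definition numbering (V : finType) (f : {ffun V -> 'I_#|V|}) : bool :=
  injectiveb f.

Definition str_f (V : finType) (e : rel V) (f : {ffun V -> 'I_#|V|}) : nat :=
  \max_(u : V) \max_(v : V | e u v) ((f u).+1 + (f v).+1).

(* str(G) = min over numberings; the default 2*#|V| is never attained since
   numberings always exist and every str_f is < 2*#|V|. *)
Definition strength (V : finType) (e : rel V) : nat :=
  \big[minn/(2 * #|V|)]_(f : {ffun V -> 'I_#|V|} | numbering f) str_f e f.

(* Disjoint union of cycles C_(c 0) + ... + C_(c (N-1)):
   vertices are pairs (i, j) with j < c i; (i,a) ~ (i,b) iff b = a+1 mod c i
   or a = b+1 mod c i. *)
Definition cycles_vertex (N : nat) (c : 'I_N -> nat) : finType :=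
  {i : 'I_N & 'I_(c i)}.

Definition cycles_rel (N : nat) (c : 'I_N -> nat) : rel (cycles_vertex c) :=
  fun u v =>
    (tag u == tag v) &&
    ((val (tagged v) == (val (tagged u)).+1 %% c (tag u)) ||
     (val (tagged u) == (val (tagged v)).+1 %% c (tag u))).

Definition even_odd_lengths (h k : nat) (m : 'I_h -> nat) (n : 'I_k -> nat)
  (i : 'I_(h + k)) : nat :=
  match split i with
  | inl a => 2 * m a
  | inr b => (2 * n b).+1
  end.

Arguments cycles_rel {N} c.
Arguments cycles_vertex {N} c.
Arguments strength {V} e.

From mathcomp Require Import all_boot all_order.
From mathcomp Require Import zify.
Set Implicit Arguments. Unset Strict Implicit. Unset Printing Implicit Defensive.

(* Let G be a disjoint union of cycles of lengths c_0, ..., c_(N-1), each at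
   least 3, with p vertices of which k cycles are odd.
   - Lower bound p + 2: the vertex labelled p has two distinct neighbours,
     one of which carries a label at least 2.
   - Lower bound p + 1 + k: if a numbering has strength s and q = s/2, the
     vertices labelled above q form an independent set B, and |B| >= p - q.
     An independent set of a cycle of length c has at most c/2 vertices,
     at most (c-1)/2 if c is odd, and one fewer if it misses a vertex
     together with both its neighbours; when s is even, the vertex labelled
     q is such a vertex.  Summing over the cycles: p + k + [s even] <= 2q.
   - Upper bound: with the even cycles listed first, the even positions of
     the cycles receive the small labels in increasing order and the odd
     positions the large labels in decreasing order ("zigzag" numbering).
     An edge of cycle i then has label sum at most p + 2 + (number of odd
     cycles before i), except the closing edge of an odd cycle, whose sum
     is at most p + k - 1.
   The file proves generic facts on strength, the structure of the cycle
   graph, the independent-set bounds, the two lower bounds, the zigzag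
   numbering, and derives the theorem for the lengths 2m_i and 2n_j + 1. *)

Lemma bigmin_le (I : finType) (P : pred I) (F : I -> nat) x i0 :
  P i0 -> \big[minn/x]_(i | P i) F i <= F i0.
Proof.
move=> Pi0; have : i0 \in index_enum I by rewrite mem_index_enum.
elim: (index_enum I) => [//|a r IH]; rewrite inE big_cons => /orP [/eqP <-|i0r].
  by rewrite Pi0 geq_minl.
by case: ifP => _; rewrite ?geq_min IH ?orbT.
Qed.

Lemma card_ord_lt n r : #|[set y : 'I_n | y < r]| <= r.
Proof.
case: (leqP n r) => [nr | rn].
  by apply: leq_trans nr; rewrite -[X in _ <= X]card_ord max_card.
have sub : [set y : 'I_n | y < r] \subset widen_ord (ltnW rn) @: [set: 'I_r].
  apply/subsetP => y; rewrite inE => yr; apply/imsetP.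
  by exists (Ordinal yr); rewrite ?inE //; apply: val_inj.
apply: leq_trans (subset_leq_card sub) _.
by apply: leq_trans (leq_imset_card _ _) _; rewrite cardsT card_ord.
Qed.

Section Strength.
Variables (V : finType) (e : rel V).
Implicit Type f : {ffun V -> 'I_#|V|}.

Lemma str_f_edge f u v : e u v -> (f u).+1 + (f v).+1 <= str_f e f.
Proof.
move=> euv; rewrite /str_f.
apply: leq_trans (@leq_bigmax_cond _ (e u) (fun v => (f u).+1 + (f v).+1) v euv) _.
exact: (@leq_bigmax _ (fun u => \max_(v | e u v) ((f u).+1 + (f v).+1)) u).
Qed.

Lemma str_f_le f : str_f e f <= 2 * #|V|.
Proof.
apply/bigmax_leqP => u _; apply/bigmax_leqP => v _.
have := ltn_ord (f u); have := ltn_ord (f v); lia.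
Qed.

Lemma numbering_surj f : numbering f -> forall y, exists x, f x = y.
Proof.
move=> /injectiveP injf y.
have : y \in codom f by apply: inj_card_onto => //; rewrite card_ord.
by case/codomP => x ->; exists x.
Qed.

Lemma card_low_labels f q : numbering f -> #|[set x | f x < q]| <= q.
Proof.
move=> /injectiveP injf; rewrite -(card_imset _ injf).
apply: leq_trans (card_ord_lt #|V| q).
apply/subset_leq_card/subsetP => y /imsetP [x]; rewrite inE => fxq ->.
by rewrite inE.
Qed.

Lemma strength_eq s :
  (exists2 f, numbering f & str_f e f <= s) ->
  (forall f, numbering f -> s <= str_f e f) -> strength e = s.
Proof.
case=> f0 nf0 sf0 low; apply/eqP; rewrite eqn_leq; apply/andP; split.
  exact: leq_trans (bigmin_le _ _ nf0) sf0.
rewrite /strength; elim/big_ind: _ => [| x y hx hy | f nf]; last exact: low.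
- by have := low f0 nf0; have := str_f_le f0; lia.
- by rewrite leq_min hx hy.
Qed.

End Strength.

Section CycleIndependentSets.
Variable c : nat.

Definition cyc_indep (B : {set 'I_c}) := forall j, j \in B -> ordS j \notin B.

Lemma ord_pred_neq (j : 'I_c) : 2 <= c -> ord_pred j != j.
Proof.
move=> c2; apply/eqP => e.
have : ordS j = j by rewrite -{1}e ord_predK.
move/(congr1 val) => /=; have jc := ltn_ord j.
case: (ltngtP j.+1 c) => H; [rewrite modn_small //; lia | lia | rewrite H modnn; lia].
Qed.

Lemma ordS_pred_neq (j : 'I_c) : 3 <= c -> ordS j != ord_pred j.
Proof.
move=> c3; apply/eqP => /(congr1 val) /=.
case: j => j jc /=; case: (posnP j) => [-> | jp].
  rewrite add0n modn_small; last lia.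
  by case: (ltngtP 1 c) => H; [rewrite modn_small //; lia | lia | lia].
have -> : (j + c).-1 = j.-1 + c by lia.
rewrite modnDr (@modn_small j.-1); last lia.
by case: (ltngtP j.+1 c) => H; [rewrite modn_small //; lia | lia | rewrite H modnn; lia].
Qed.

Lemma cyc_indep_shift (B : {set 'I_c}) : cyc_indep B ->
  #|B :|: (@ord_pred c @: B)| = 2 * #|B|.
Proof.
move=> indepB; have := cardsUI B (@ord_pred c @: B).
have -> : B :&: (@ord_pred c @: B) = set0.
  apply/setP => j; rewrite !inE; apply/andP => -[jB /imsetP [j1 j1B ej]].
  by move: (indepB _ jB); rewrite ej ord_predK j1B.
rewrite cards0 addn0 card_imset; last exact: ord_pred_inj.
by move=> ->; rewrite mul2n addnn.
Qed.

Lemma cyc_indep_shift_avoid (B : {set 'I_c}) j0 : cyc_indep B ->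
  j0 \notin B -> ordS j0 \notin B -> ord_pred j0 \notin B ->
  B :|: (@ord_pred c @: B) \subset ~: [set j0; ord_pred j0].
Proof.
move=> indepB h0 hS hP; apply/subsetP => j; rewrite !inE => /orP [jB | /imsetP [j1 j1B ->]].
  by apply/negP => /orP [] /eqP ej; move: jB; rewrite ej ?(negbTE h0) ?(negbTE hP).
apply/negP => /orP [] /eqP ej.
  by move: hS; rewrite -ej ord_predK j1B.
by move: j1B; rewrite (ord_pred_inj ej) (negbTE h0).
Qed.

Lemma cyc_indep_bound (B : {set 'I_c}) (b : bool) : 2 <= c -> cyc_indep B ->
  (b -> exists j0, [/\ j0 \notin B, ordS j0 \notin B & ord_pred j0 \notin B]) ->
  2 * #|B| + odd c + b <= c.
Proof.
move=> c2 indepB hb; have parity := modn2 c.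
have shift := cyc_indep_shift indepB.
set nB := #|B| in shift *.
have cover : 2 * nB <= c by rewrite -shift -[X in _ <= X]card_ord max_card.
case: b hb => [/(_ isT) [j0 [h0 hS hP]] | _]; last by case: (odd c) parity => /=; lia.
have := subset_leq_card (cyc_indep_shift_avoid indepB h0 hS hP); rewrite shift.
have := cardsC [set j0; ord_pred j0].
rewrite cards2 eq_sym (ord_pred_neq _ c2) card_ord.
by case: (odd c) parity => /=; lia.
Qed.

End CycleIndependentSets.

Section CycleGraph.
Variables (N : nat) (c : 'I_N -> nat).

Definition vsucc (x : cycles_vertex c) : cycles_vertex c :=
  let: existT i j := x in existT _ i (ordS j).
Definition vpred (x : cycles_vertex c) : cycles_vertex c :=
  let: existT i j := x in existT _ i (ord_pred j).

Lemma rel_succ x : cycles_rel c x (vsucc x).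
Proof. by case: x => i j; rewrite /cycles_rel /= !eqxx. Qed.

Lemma rel_pred x : cycles_rel c x (vpred x).
Proof.
case: x => i j; rewrite /cycles_rel /= eqxx /=.
by have := ord_predK j => /(congr1 val) /= ->; rewrite eqxx orbT.
Qed.

Lemma rel_inv x y : cycles_rel c x y -> y = vsucc x \/ x = vsucc y.
Proof.
case: x y => [i j] [i' j']; rewrite /cycles_rel /=.
case/andP => /eqP eii; subst i'; case/orP => /eqP H.
  by left; congr existT; apply: val_inj.
by right; congr existT; apply: val_inj.
Qed.

Lemma card_cycles_set (B : {set cycles_vertex c}) :
  #|B| = \sum_i #|[set j : 'I_(c i) | existT _ i j \in B]|.
Proof.
pose inB i (j : 'I_(c i)) := if existT _ i j \in B then 1 else 0.
transitivity (\sum_i \sum_(j : 'I_(c i)) inB i j).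
  rewrite (@sig_big_dep _ 0 addn _ (fun i => 'I_(c i)) xpredT (fun _ => xpredT) inB).
  by rewrite -sum1_card big_mkcond; apply: eq_big => // -[i j].
apply: eq_bigr => i _; rewrite -sum1_card [RHS]big_mkcond.
by apply: eq_bigr => j _; rewrite inE.
Qed.

Lemma card_cycles_vertex : #|cycles_vertex c| = \sum_i c i.
Proof.
rewrite -cardsT card_cycles_set; apply: eq_bigr => i _.
by rewrite -[RHS]card_ord; apply: eq_card => j; rewrite !inE.
Qed.

Lemma cycles_indep_bound (B : {set cycles_vertex c}) (b : bool) :
  (forall i, 2 <= c i) ->
  (forall x, x \in B -> vsucc x \notin B) ->
  (b -> exists x, [/\ x \notin B, vsucc x \notin B & vpred x \notin B]) ->
  2 * #|B| + \sum_i odd (c i) + b <= #|cycles_vertex c|.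
Proof.
move=> hc indepB hb.
pose Bi i := [set j : 'I_(c i) | existT _ i j \in B].
have indepBi i : cyc_indep (Bi i).
  by move=> j; rewrite !inE; exact: (indepB (existT _ i j)).
have summed (bon : 'I_N -> bool) :
    (forall i, bon i -> exists j0, [/\ j0 \notin Bi i, ordS j0 \notin Bi i
                                      & ord_pred j0 \notin Bi i]) ->
    2 * #|B| + \sum_i bon i + \sum_i odd (c i) <= #|cycles_vertex c|.
  move=> hbon; rewrite addnAC card_cycles_vertex card_cycles_set big_distrr -!big_split.
  by apply: leq_sum => i _ /=; exact: cyc_indep_bound (hc i) (indepBi i) (hbon i).
rewrite addnAC; case: b hb => [/(_ isT) [[i0 j0] [h0 hS hP]] | _].
  apply: leq_trans (summed (fun i => i == i0) _) => [|i /eqP ->].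
    by rewrite [\sum_i (i == i0)](bigD1 i0) //= eqxx [\sum_(i | i != i0) _]big1 // => i /negbTE ->.
  by exists j0; rewrite !inE.
by apply: leq_trans (summed (fun _ => false) _) => //; rewrite [\sum_i false]big1.
Qed.

End CycleGraph.

Section LowerBounds.
Variables (N : nat) (c : 'I_N -> nat).
Hypothesis hc : forall i, 3 <= c i.
Variable f : {ffun cycles_vertex c -> 'I_#|cycles_vertex c|}.
Hypothesis nf : numbering f.

(* The vertex labelled p has two distinct neighbours, one labelled >= 2. *)
Lemma str_lower_p2 : 0 < #|cycles_vertex c| ->
  #|cycles_vertex c| + 2 <= str_f (cycles_rel c) f.
Proof.
move=> p0; have /injectiveP injf := nf.
have top : #|cycles_vertex c|.-1 < #|cycles_vertex c| by rewrite ltn_predL.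
have [u fu] := numbering_surj nf (Ordinal top).
have E1 := str_f_edge f (rel_succ u).
have E2 := str_f_edge f (rel_pred u).
have : f (vsucc u) != f (vpred u).
  by rewrite (inj_eq injf); case: u {fu E1 E2} => i j; rewrite eq_Tagged ordS_pred_neq.
rewrite -val_eqE /= fu /= in E1 E2 * => neq.
by move: E1 E2 neq; lia.
Qed.

(* With s the strength of f and q = s/2, the vertices labelled above q form
   an independent set of size >= p - q, which for even s misses the vertex
   labelled q and both its neighbours. *)
Lemma str_lower_odd : 0 < #|cycles_vertex c| ->
  #|cycles_vertex c| + 1 + \sum_i odd (c i) <= str_f (cycles_rel c) f.
Proof.
move=> p0; have s_ge := str_lower_p2 p0.
have s_le := str_f_le (cycles_rel c) f.
set p := #|cycles_vertex c| in p0 s_ge s_le *.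
set s := str_f (cycles_rel c) f in s_ge s_le *.
set q := s %/ 2.
pose B := [set x | q <= f x].
have indepB x : x \in B -> vsucc x \notin B.
  rewrite !inE => hx; apply/negP => hsx.
  by have := str_f_edge f (rel_succ x); rewrite -/s /q; lia.
have largeB : p <= #|B| + q.
  have -> : #|B| = p - #|[set x | f x < q]|.
    have <- : ~: B = [set x | f x < q] by apply/setP => x; rewrite !inE ltnNge.
    by rewrite [#|B|]cardsCs.
  by have := card_low_labels q nf; have := max_card [set x | f x < q]; lia.
have gap : ~~ odd s -> exists x, [/\ x \notin B, vsucc x \notin B & vpred x \notin B].
  move=> s_even; have qp : q.-1 < p by rewrite /q; lia.
  have [M fM] := numbering_surj nf (Ordinal qp).
  have := str_f_edge f (rel_succ M); have := str_f_edge f (rel_pred M).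
  rewrite -/s fM /= => E2 E1; exists M; rewrite !inE fM /= -!ltnNge.
  by have := modn2 s; rewrite (negbTE s_even) /q; split; lia.
have := cycles_indep_bound (fun i => ltnW (hc i)) indepB gap; rewrite -/p.
set nB := #|B| in largeB *.
by have := modn2 s; rewrite /q; case: (odd s) => /=; lia.
Qed.

End LowerBounds.

Section ZigzagNumbering.
Variables (N : nat) (c : 'I_N -> nat).

Definition psum (F : nat -> nat) (t : nat) := \sum_(i < N | i < t) F (c i).

Lemma psum_step F (i : 'I_N) : psum F i + F (c i) = psum F i.+1.
Proof.
rewrite /psum [in RHS](bigD1 i) //= addnC; congr addn.
by apply: eq_bigl => i0; rewrite ltnS ltn_neqAle andbC.
Qed.

Lemma psum_mono F t t' : t <= t' -> psum F t <= psum F t'.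
Proof.
move=> tt'; rewrite /psum [X in X <= _]big_mkcond [X in _ <= X]big_mkcond /=.
by apply: leq_sum => i _; case: ifP => // it; rewrite ifT //; lia.
Qed.

Lemma psum_all F : psum F N = \sum_i F (c i).
Proof. by apply: eq_bigl => i; rewrite ltn_ord. Qed.

Lemma psumD F G t : psum (fun x => F x + G x) t = psum F t + psum G t.
Proof. exact: big_split. Qed.

Lemma psum_lt F (i : 'I_N) j : j < F (c i) -> psum F i + j < psum F N.
Proof. by move=> jF; have := psum_step F i; have := psum_mono F (ltn_ord i); lia. Qed.

Lemma psum_inj F (i i' : 'I_N) j j' : j < F (c i) -> j' < F (c i') ->
  psum F i + j = psum F i' + j' -> i = i' /\ j = j'.
Proof.
move=> jF j'F E; case: (ltngtP i i') => ii'.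
- by have := psum_step F i; have := psum_mono F ii'; lia.
- by have := psum_step F i'; have := psum_mono F ii'; lia.
- have ei : i = i' by apply: val_inj.
  by subst i'; split => //; lia.
Qed.

Definition ceil_half (x : nat) := (x + 1) %/ 2.
Definition floor_half (x : nat) := x %/ 2.
Definition mod2 (x : nat) := x %% 2.

(* Zigzag numbering (0-based): position j of cycle i gets the
   (psum ceil_half i + j/2)-th smallest label if j is even, and the
   (psum floor_half i + j/2)-th largest label if j is odd. *)
Definition zigzag (x : cycles_vertex c) : nat :=
  let: existT i j := x in
  if odd j then (psum ceil_half N + psum floor_half N).-1 - (psum floor_half i + j %/ 2)
  else psum ceil_half i + j %/ 2.

Lemma card_zigzag : #|cycles_vertex c| = psum ceil_half N + psum floor_half N.
Proof.
rewrite card_cycles_vertex -psumD psum_all; apply: eq_bigr => i _.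
rewrite /ceil_half /floor_half; lia.
Qed.

Lemma psum_ceil_half t : psum ceil_half t = psum floor_half t + psum mod2 t.
Proof. by rewrite -psumD; apply: eq_bigr => i _; rewrite /ceil_half /floor_half /mod2; lia. Qed.

Lemma odd_pos_lt n j : j < n -> odd j -> j %/ 2 < floor_half n.
Proof. by move=> jn oj; have := modn2 j; rewrite oj /floor_half => ?; lia. Qed.

Lemma even_pos_lt n j : j < n -> ~~ odd j -> j %/ 2 < ceil_half n.
Proof. by move=> jn ej; have := modn2 j; rewrite (negbTE ej) /ceil_half => ?; lia. Qed.

Lemma zigzag_lt x : zigzag x < psum ceil_half N + psum floor_half N.
Proof.
case: x => i [j jc] /=; case: ifP => oj.
  by have := psum_lt (odd_pos_lt jc oj); lia.
by have := psum_lt (even_pos_lt jc (negbT oj)); lia.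
Qed.

Lemma zigzag_inj : injective zigzag.
Proof.
have same_pos (i : 'I_N) j j' (jc : j < c i) (jc' : j' < c i) :
    odd j = odd j' -> j %/ 2 = j' %/ 2 ->
    existT (fun i => 'I_(c i)) i (Ordinal jc) = existT _ i (Ordinal jc').
  move=> oj dj; congr existT; apply: val_inj => /=.
  by have := modn2 j; have := modn2 j'; rewrite oj; lia.
move=> x y; have := zigzag_lt x; have := zigzag_lt y.
case: x y => [i [j jc]] [i' [j' jc']] /=.
case: ifP => oj'; case: ifP => oj /= lt1 lt2 E.
- have := psum_lt (odd_pos_lt jc oj); have := psum_lt (odd_pos_lt jc' oj') => L' L.
  have [ei ej] : i = i' /\ j %/ 2 = j' %/ 2.
    by apply: psum_inj (odd_pos_lt jc oj) (odd_pos_lt jc' oj') _; lia.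
  by subst i'; apply: same_pos => //; rewrite oj oj'.
- have := psum_lt (even_pos_lt jc (negbT oj)).
  by have := psum_lt (odd_pos_lt jc' oj'); lia.
- have := psum_lt (odd_pos_lt jc oj).
  by have := psum_lt (even_pos_lt jc' (negbT oj')); lia.
- have [ei ej] := psum_inj (even_pos_lt jc (negbT oj)) (even_pos_lt jc' (negbT oj')) E.
  by subst i'; apply: same_pos => //; rewrite oj oj'.
Qed.

Hypothesis hc : forall i, 3 <= c i.

(* Label sums along the edges: p + 2 + (odd cycles before i) within cycle i,
   and p + (odd cycles) - 1 for the closing edge of an odd cycle. *)
Lemma zigzag_edge s x :
  (forall i : 'I_N, #|cycles_vertex c| + 2 + psum mod2 i <= s) ->
  #|cycles_vertex c| + psum mod2 N <= s + 1 ->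
  (zigzag x).+1 + (zigzag (vsucc x)).+1 <= s.
Proof.
rewrite card_zigzag => inner_bound closing_bound; case: x => i [j jc] /=.
have bound_i := inner_bound i; have ci := hc i; have parity := modn2 j.
have ceil_i := psum_ceil_half i; have ceil_N := psum_ceil_half N.
have step_i := psum_step ceil_half i; have mono_i := psum_mono ceil_half (ltn_ord i).
case: (ltnP j.+1 (c i)) => [inner | closing].
- rewrite (modn_small inner) /=.
  case: (odd j) (@odd_pos_lt (c i) j jc) parity => /= odd_lt parity.
  + by have := psum_lt (odd_lt isT); lia.
  + have : psum floor_half i + j.+1 %/ 2 < psum floor_half N.
      by apply: psum_lt; rewrite /floor_half; lia.
    lia.
- have -> : j.+1 = c i by lia.
  rewrite modnn /=.
  case: (odd j) (@odd_pos_lt (c i) j jc) parity => /= odd_lt parity.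
  + by have := psum_lt (odd_lt isT); lia.
  + have : ceil_half (c i) = j %/ 2 + 1 by rewrite /ceil_half; lia.
    by have := psum_mono floor_half (ltnW (ltn_ord i)); lia.
Qed.

Lemma zigzag_numbering s :
  (forall i : 'I_N, #|cycles_vertex c| + 2 + psum mod2 i <= s) ->
  #|cycles_vertex c| + psum mod2 N <= s + 1 ->
  exists2 f : {ffun cycles_vertex c -> 'I_#|cycles_vertex c|},
    numbering f & str_f (cycles_rel c) f <= s.
Proof.
move=> inner_bound closing_bound.
have lt_p x : zigzag x < #|cycles_vertex c| by rewrite card_zigzag zigzag_lt.
exists [ffun x => Ordinal (lt_p x)].
  by apply/injectiveP => x y; rewrite !ffunE => /(congr1 val); exact: zigzag_inj.
apply/bigmax_leqP => u _; apply/bigmax_leqP => v euv; rewrite !ffunE /=.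
case: (rel_inv euv) => ->; first exact: zigzag_edge.
by rewrite addnC; exact: zigzag_edge.
Qed.

End ZigzagNumbering.

Section EvenThenOdd.
Variables (h k : nat) (m : 'I_h -> nat) (n : 'I_k -> nat).
Hypotheses (hm : forall i, 2 <= m i) (hn : forall j, 1 <= n j).

Lemma even_odd_lengthsP (i : 'I_(h + k)) :
  3 <= even_odd_lengths m n i /\ odd (even_odd_lengths m n i) = (h <= i).
Proof.
rewrite /even_odd_lengths; case: fintype.splitP => [j ej | j ej].
  by have := hm j; rewrite ej oddM /= (leqNgt h) ltn_ord /=; split => //; lia.
by have := hn j; rewrite ej oddS oddM /=; split; [lia | rewrite leq_addr].
Qed.

Lemma psum_mod2_le t : psum (even_odd_lengths m n) mod2 t <= t - h.
Proof.
rewrite /psum (eq_bigr (fun i : 'I_(h + k) => nat_of_bool (h <= i))); last first.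
  by move=> i _; rewrite /mod2 modn2; case: (even_odd_lengthsP i) => _ ->.
rewrite big_split_ord /= big1 => [|i _]; last by rewrite leqNgt ltn_ord.
rewrite add0n (eq_big (fun i : 'I_k => i < t - h) (fun _ => 1)) => [|i|i _].
- by rewrite sum1_card; have := card_ord_lt k (t - h); rewrite cardsE.
- by lia.
- by rewrite leq_addr.
Qed.

Lemma count_odd_lengths : \sum_i odd (even_odd_lengths m n i) = k.
Proof.
rewrite (eq_bigr (fun i : 'I_(h + k) => nat_of_bool (h <= i))); last first.
  by move=> i _; case: (even_odd_lengthsP i) => _ ->.
rewrite big_split_ord /= big1 => [|i _]; last by rewrite leqNgt ltn_ord.
rewrite add0n (eq_bigr (fun _ => 1)) => [|i _]; last by rewrite leq_addr.
by rewrite sum1_card card_ord.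
Qed.

End EvenThenOdd.

Theorem mainTheorem13 (h k : nat) (m : 'I_h -> nat) (n : 'I_k -> nat) :
  0 < h + k ->
  (forall i, 2 <= m i) ->
  (forall j, 1 <= n j) ->
  let c := even_odd_lengths m n in
  let p := #|cycles_vertex c| in
  strength (cycles_rel c) = maxn (p + 2) (p + 1 + k).
Proof.
move=> hk hm hn c p.
have hc i : 3 <= c i by case: (even_odd_lengthsP hm hn i).
have odd_k := count_odd_lengths hm hn.
have p0 : 0 < p.
  by rewrite /p card_cycles_vertex (bigD1 (Ordinal hk)) //=; have := hc (Ordinal hk); lia.
apply: strength_eq.
- apply: zigzag_numbering => // [i|].
    by have := psum_mod2_le hm hn i; have := ltn_ord i; rewrite -/c -/p; lia.
  have odd_total : psum c mod2 (h + k) = k.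
    by rewrite psum_all -[RHS]odd_k; apply: eq_bigr => i _; exact: modn2.
  by rewrite odd_total -/p; lia.
- move=> f nf; have := str_lower_p2 hc nf p0; have := str_lower_odd hc nf p0.
  by rewrite odd_k -/p; lia.
Qed.
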